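(* Let $\mathcal C$ be a hereditary class of graphs with infinite VC-dimension and let $H=(H_\ell\cup H_r,E)$ be a bipartite graph with bipartition $(H_\ell,H_r)$. Then at least one of the four graphs $H^{0,0},H^{1,0},H^{0,1},H^{1,1}$ belongs to $\mathcal C$.
   Context: A class of graphs is hereditary if it is closed under isomorphism and under taking induced subgraphs. A set $X\subseteq V(G)$ is shattered if for every $S\subseteq X$ there is a vertex $v$ with $N[v]\cap X=S$ (where $N[v]$ is the closed neighbourhood); the VC-dimension of $G$ is the largest size of a shattered set; a class has infinite VC-dimension if these are unbounded over the class. For a bipartite graph $H$ with bipartition $(A,B)$: $H^{0,0}=H$; $H^{1,0}$ is obtained from $H$ by adding all edges between vertices of $A$ (making $A$ a clique); $H^{0,1}$ is obtained by making $B$ a clique; $H^{1,1}$ is obtained by making both $A$ and $B$ cliques. *)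

From mathcomp Require Import all_boot.
Set Implicit Arguments. Unset Strict Implicit. Unset Printing Implicit Defensive.

Record sgraph := SGraph {
  svert :> finType;
  sadj : rel svert;
  sadj_sym : symmetric sadj;
  sadj_irr : irreflexive sadj }.

Definition graph_class := sgraph -> Prop.

Definition iso_closed (C : graph_class) : Prop :=
  forall (G H : sgraph) (f : G -> H), bijective f ->
    (forall x y, sadj x y = sadj (f x) (f y)) -> C G -> C H.

Definition induced_adj (G : sgraph) (A : {set G}) : rel {x : G | x \in A} :=
  fun x y => sadj (val x) (val y).

Lemma induced_sym (G : sgraph) (A : {set G}) : symmetric (@induced_adj G A).
Proof. by move=> x y; rewrite /induced_adj sadj_sym. Qed.

Lemma induced_irr (G : sgraph) (A : {set G}) : irreflexive (@induced_adj G A).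
Proof. by move=> x; rewrite /induced_adj sadj_irr. Qed.

Definition induced (G : sgraph) (A : {set G}) : sgraph :=
  @SGraph _ (@induced_adj G A) (@induced_sym G A) (@induced_irr G A).

Definition induced_closed (C : graph_class) : Prop :=
  forall (G : sgraph) (A : {set G}), C G -> C (induced A).

Definition hereditary (C : graph_class) : Prop := iso_closed C /\ induced_closed C.

Definition cnbhd (G : sgraph) (v : G) : {set G} := [set u | (u == v) || sadj v u].

Definition shattered (G : sgraph) (X : {set G}) : Prop :=
  forall S : {set G}, S \subset X -> exists v : G, cnbhd v :&: X = S.

Definition infinite_VC (C : graph_class) : Prop :=
  forall k : nat, exists (G : sgraph) (X : {set G}), C G /\ shattered X /\ k <= #|X|.

(* Bipartite graph H with sides L (left) and R (right), edges given by r.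
   bip_adj a b r is the adjacency of H^{a,b}: a = true makes L a clique,
   b = true makes R a clique. *)
Definition bip_adj (L R : finType) (a b : bool) (r : L -> R -> bool) : rel (L + R)%type :=
  fun x y => match x, y with
  | inl x, inl y => a && (x != y)
  | inr x, inr y => b && (x != y)
  | inl x, inr y => r x y
  | inr y, inl x => r x y
  end.

Lemma bip_sym L R a b r : symmetric (@bip_adj L R a b r).
Proof. by case=> [x|x] [y|y] //=; rewrite eq_sym. Qed.

Lemma bip_irr L R a b r : irreflexive (@bip_adj L R a b r).
Proof. by case=> [x|x] /=; rewrite eqxx andbF. Qed.

Definition Hab (L R : finType) (r : L -> R -> bool) (a b : bool) : sgraph :=
  @SGraph _ (bip_adj a b r) (@bip_sym L R a b r) (@bip_irr L R a b r).

From mathcomp Require Import all_boot zify.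
Set Implicit Arguments. Unset Strict Implicit. Unset Printing Implicit Defensive.

(* Ramsey's theorem turns a huge shattered set of a graph in C into a large
   shattered set Y that is a clique or an independent set. Label the vertices
   of Y by triples (T, b, j), T a set of indices i < M. Shattering gives, for
   each i, a vertex w_i whose closed neighbourhood meets Y in exactly the
   labels with i in T, and homogeneity of Y forces w_i outside Y. Ramsey again
   yields #|R| of the w_i forming a clique or an independent set: they are the
   right side of H, and the vertices labelled (N_H(l), false, l) the left side
   of an induced copy of some H^{a,b}. *)

Definition homogeneous (T : finType) (e : rel T) (c : bool) (B : {set T}) :=
  {in B &, forall x y, x != y -> e x y = c}.

Lemma homogeneous_sub (T : finType) (e : rel T) c (A B : {set T}) :
  A \subset B -> homogeneous e c B -> homogeneous e c A.
Proof. by move=> /subsetP sAB hB x y /sAB xB /sAB yB; apply: hB. Qed.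

Lemma homogeneous_setU1 (T : finType) (e : rel T) (e_sym : symmetric e) c
    x (B : {set T}) :
  homogeneous e c B -> {in B, forall y, e x y = c} -> homogeneous e c (x |: B).
Proof.
move=> hB hx u v; rewrite !in_setU1.
case/orP=> [/eqP->|uB] /orP[/eqP->|vB]; rewrite ?eqxx //.
- by move=> _; apply: hx.
- by move=> _; rewrite e_sym; apply: hx.
- exact: hB.
Qed.

Section Ramsey.

Variables (T : finType) (e : rel T).
Hypothesis e_sym : symmetric e.

Lemma homogeneous_extend c x (A B : {set T}) :
    x \in A -> B \subset [set y in A :\ x | e x y == c] -> homogeneous e c B ->
  [/\ x |: B \subset A, #|x |: B| = #|B|.+1 & homogeneous e c (x |: B)].
Proof.
move=> xA /subsetP sB hB; have xB : x \notin B.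
  by apply/negP=> /sB; rewrite !inE eqxx.
split; first by apply/subsetP=> y; case/setU1P=> [->|/sB]; rewrite // !inE => /andP[/andP[]].
  by rewrite cardsU1 xB.
by apply: homogeneous_setU1 => // y /sB; rewrite inE => /andP[_ /eqP].
Qed.

Lemma ramsey m n (A : {set T}) : 2 ^ (m + n) <= #|A| ->
  exists2 B : {set T}, B \subset A &
    (m <= #|B| /\ homogeneous e true B) \/ (n <= #|B| /\ homogeneous e false B).
Proof.
elim: m n A => [|m IHm] n A.
  by exists set0; [exact: sub0set | left; split=> // ? ?; rewrite inE].
elim: n A => [|n IHn] A hA.
  by exists set0; [exact: sub0set | right; split=> // ? ?; rewrite inE].
have [x xA] : exists x, x \in A.
  by apply/set0Pn; apply: contraTneq hA => ->; rewrite cards0 -ltnNge expn_gt0.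
pose N c := [set y in A :\ x | e x y == c].
have sNA c : N c \subset A.
  by apply/subsetP=> y; rewrite !inE => /andP[/andP[]].
have cardN : #|N true| + #|N false| = #|A|.-1.
  rewrite (cardsD1 x A) xA add1n /= -(cardsID [set y | e x y] (A :\ x)).
  congr (_ + _); apply: eq_card => y; rewrite !inE.
    by rewrite eqb_id.
  by rewrite eqbF_neg andbC.
have [hT|hF] : 2 ^ (m + n.+1) <= #|N true| \/ 2 ^ (m.+1 + n) <= #|N false|.
  by move: hA; rewrite !addSn !addnS !expnS; lia.
- have [B sB [[mB hB]|nB]] := IHm _ _ hT.
    have [sxB cxB hxB] := homogeneous_extend xA sB hB.
    by exists (x |: B) => //; left; rewrite cxB.
  by exists B; [exact: subset_trans sB (sNA true) | right].
- have [B sB [mB|[nB hB]]] := IHn _ hF.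
    by exists B; [exact: subset_trans sB (sNA false) | left].
  have [sxB cxB hxB] := homogeneous_extend xA sB hB.
  by exists (x |: B) => //; right; rewrite cxB.
Qed.

Lemma ramsey_diag n (A : {set T}) : 2 ^ (n + n) <= #|A| ->
  exists c (B : {set T}), [/\ B \subset A, n <= #|B| & homogeneous e c B].
Proof.
by case/ramsey=> B sB [[nB hB]|[nB hB]]; [exists true | exists false]; exists B.
Qed.

End Ramsey.

Lemma exists_inj_in (K T : finType) (B : {set T}) : #|K| <= #|B| ->
  exists2 f : K -> T, injective f & forall k, f k \in B.
Proof.
move=> KB; exists (fun k => enum_val (widen_ord KB (enum_rank k))).
  by move=> k k' /enum_val_inj /(congr1 val) /= /val_inj; apply: enum_rank_inj.
by move=> k; apply: enum_valP.
Qed.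

Lemma shattered_sub (G : sgraph) (X Y : {set G}) :
  Y \subset X -> shattered X -> shattered Y.
Proof.
move=> sYX shX S sSY; have [v vS] := shX S (subset_trans sSY sYX).
by exists v; rewrite -(setIidPr sYX) setIA vS; apply/setIidPl.
Qed.

Lemma cnbhd_homogeneous (G : sgraph) a (Y : {set G}) v :
  homogeneous (@sadj G) a Y -> v \in Y -> cnbhd v :&: Y = if a then Y else [set v].
Proof.
move=> hY vY; apply/setP=> u; rewrite !inE.
have [->|uv] := eqVneq u v; first by case: a {hY}; rewrite ?inE ?eqxx.
have [uY|uY] := boolP (u \in Y); rewrite /= ?andbT ?andbF.
  by rewrite hY 1?eq_sym //; case: a {hY}; rewrite ?inE ?uY ?(negbTE uv).
by case: a {hY}; rewrite ?inE ?(negbTE uY) ?(negbTE uv).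
Qed.

(* A witness inside [Y] would have trace [Y] or a singleton. *)
Lemma shattered_witness_notin (G : sgraph) a (Y S : {set G}) :
    shattered Y -> homogeneous (@sadj G) a Y ->
    S \subset Y -> S != Y -> (forall v, S != [set v]) ->
  exists2 v, v \notin Y & cnbhd v :&: Y = S.
Proof.
move=> shY hY sSY SnY Sn1; have [v vS] := shY S sSY.
exists v => //; apply/negP=> vY; move: vS; rewrite (cnbhd_homogeneous hY vY).
by case: a {hY} => /esym/eqP; rewrite ?(negbTE SnY) ?(negbTE (Sn1 v)).
Qed.

Lemma hereditary_embedding (C : graph_class) (G H : sgraph) (f : H -> G) :
    hereditary C -> C G -> injective f ->
    (forall x y, sadj (f x) (f y) = sadj x y) ->
  C H.
Proof.
move=> [C_iso C_ind] CG f_inj f_adj.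
pose V := f @: [set: H].
pose g (x : H) : induced V := exist _ (f x) (imset_f f (in_setT x)).
have g_inj : injective g by move=> x y /(congr1 val) /f_inj.
have [h gK hK] : bijective g.
  apply: (inj_card_bij g_inj); rewrite card_sig.
  by rewrite (eq_card (B := V)) // card_imset // cardsT.
apply: (C_iso _ _ h); first exact: (Bijective hK gK).
  by move=> u v; rewrite -{1}(hK u) -{1}(hK v) /= /induced_adj /= f_adj.
exact: C_ind.
Qed.

Lemma hereditary_Hab (C : graph_class) (G : sgraph) (L R : finType)
    (r : L -> R -> bool) (a b : bool) (x : L -> G) (y : R -> G) :
    hereditary C -> C G -> injective x -> injective y -> (forall l j, x l != y j) ->
    (forall l l', l != l' -> sadj (x l) (x l') = a) ->
    (forall j j', j != j' -> sadj (y j) (y j') = b) ->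
    (forall l j, sadj (x l) (y j) = r l j) ->
  C (Hab r a b).
Proof.
move=> hC CG x_inj y_inj xNy x_hom y_hom xy_adj.
pose f z := match z with inl l => x l | inr j => y j end.
apply: (@hereditary_embedding C G (Hab r a b) f) => //.
  case=> [l|j] [l'|j'] /= => [/x_inj->|/eqP|/eqP|/y_inj->] //.
    by rewrite (negbTE (xNy _ _)).
  by rewrite eq_sym (negbTE (xNy _ _)).
case=> [l|j] [l'|j'] /=.
- by have [<-|ll'] := eqVneq l l'; rewrite ?sadj_irr ?andbF // x_hom ?andbT.
- exact: xy_adj.
- by rewrite sadj_sym xy_adj.
- by have [<-|jj'] := eqVneq j j'; rewrite ?sadj_irr ?andbF // y_hom ?andbT.
Qed.

Section LabelledWitnesses.

Variables (G : sgraph) (a : bool) (I J : finType) (j0 : J).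
Variable e : {set I} * bool * J -> G.
Hypothesis e_inj : injective e.
Let Y := e @: [set: {set I} * bool * J].
Hypotheses (Y_shattered : shattered Y) (Y_hom : homogeneous (@sadj G) a Y).

(* The boolean coordinate doubles every pattern, so no [e @: P i] is a
   singleton, and the vertex labelled [(set0, false, j0)] lies outside it. *)
Let P i := [set k : {set I} * bool * J | i \in k.1.1].

Lemma labelled_witness i : exists2 v, v \notin Y & cnbhd v :&: Y = e @: P i.
Proof.
apply: shattered_witness_notin Y_shattered Y_hom _ _ _.
- exact/imsetS/subsetT.
- apply/negP=> /eqP PY; have := imset_f e (in_setT ((set0, false), j0)).
  by rewrite -/Y -PY mem_imset // inE in_set0.
move=> v; apply/eqP=> Pv.
have inP b : e (([set i], b), j0) \in [set v].
  by rewrite -Pv mem_imset // !inE.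
by move: (inP false) (inP true); rewrite !inE => /eqP<- /eqP/e_inj.
Qed.

Lemma labelled_witnesses : exists w : I -> G,
  [/\ injective w, forall i k, w i != e k &
      forall i T b j, sadj (w i) (e ((T, b), j)) = (i \in T)].
Proof.
have /fin_all_exists[w w_spec] :
    forall i, exists v, v \notin Y /\ cnbhd v :&: Y = e @: P i.
  by move=> i; have [v] := labelled_witness i; exists v.
have wNe i k : w i != e k.
  by apply: contraNneq (w_spec i).1 => ->; apply: imset_f.
have w_adj i k : sadj (w i) (e k) = (k \in P i).
  rewrite -(mem_imset _ _ e_inj) -(w_spec i).2 !inE imset_f // andbT.
  by rewrite eq_sym (negbTE (wNe _ _)).
exists w; split=> // [i i' ww'|i T b j]; last by rewrite w_adj inE.
have := w_adj i (([set i], false), j0); rewrite ww' w_adj !inE eqxx.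
by move/eqP.
Qed.

End LabelledWitnesses.

Theorem mainTheorem7 (C : graph_class) (hC : hereditary C) (hVC : infinite_VC C)
  (L R : finType) (r : L -> R -> bool) :
  C (Hab r false false) \/ C (Hab r true false) \/
  C (Hab r false true) \/ C (Hab r true true).
Proof.
suff [a [b CH]] : exists a b, C (Hab r a b) by case: a b CH => [] []; tauto.
pose M := 2 ^ (#|R| + #|R|).
pose K : finType := ({set 'I_M} * bool * option L)%type.
have [G [X [CG [X_sh X_big]]]] := hVC (2 ^ (#|K| + #|K|)).
have [a [B [sBX KB B_hom]]] := ramsey_diag (@sadj_sym G) X_big.
have [e e_inj eB] := exists_inj_in KB.
have sYB : e @: [set: K] \subset B by apply/subsetP=> _ /imsetP[k _ ->].
have [w [w_inj wNe w_adj]] := labelled_witnesses None e_inj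
  (shattered_sub (subset_trans sYB sBX) X_sh) (homogeneous_sub sYB B_hom).
have M_big : 2 ^ (#|R| + #|R|) <= #|[set: 'I_M]| by rewrite cardsT card_ord.
have [b [B' [_ RB' B'_hom]]] :=
  ramsey_diag (e := fun i i' => sadj (w i) (w i')) (fun _ _ => sadj_sym _ _) M_big.
have [idx idx_inj idxB'] := exists_inj_in RB'.
pose x l := e (([set idx j | j in R & r l j], false), Some l).
exists a, b; apply: (@hereditary_Hab C G L R r a b x (w \o idx)) => //.
- by move=> l l' /e_inj[_].
- exact: inj_comp.
- by move=> l j; rewrite eq_sym wNe.
- move=> l l' ll'; apply: B_hom; rewrite ?eB // (inj_eq e_inj).
  by apply: contra ll' => /eqP[_ ->].
- by move=> j j' jj'; apply: B'_hom; rewrite ?idxB' // (inj_eq idx_inj).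
- by move=> l j; rewrite sadj_sym /= w_adj mem_imset // inE.
Qed.
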